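(* Let $d,l,m\geq 1$ be integers, and fix arbitrary norms $\|\cdot\|$ on the real vector space $H(d)$ of $d\times d$ Hermitian matrices and on the real vector space $M_{lm}(\mathbb{R})$ of real $l\times m$ matrices. Let $\mathcal{Q}=\{P_1,\dots,P_l\}$ be a measurement scheme consisting of $l$ POVMs, each with outcome set $\{1,\dots,m\}$, and suppose $\mathcal{Q}$ determines any pure state among all states. Then there exists $\epsilon>0$ such that every measurement scheme $\mathcal{Q}'=\{P'_1,\dots,P'_l\}$ (of $l$ POVMs with outcome set $\{1,\dots,m\}$) which is $\epsilon$-close to $\mathcal{Q}$ also determines any pure state among all states.
   Context: A POVM with outcome set $\{1,\dots,m\}$ is a map $j\mapsto P(j)$ into $H(d)$ with $P(j)\geq 0$ for all $j$ and $\sum_{j=1}^m P(j)=\mathbb{1}$. A measurement scheme $\mathcal{Q}=\{P_1,\dots,P_l\}$ induces the real-linear map $M_{\mathcal{Q}}:H(d)\to M_{lm}(\mathbb{R})$, $M_{\mathcal{Q}}(X)_{i,j}=\mathrm{tr}(X P_i(j))$. $\mathcal{Q}$ determines any pure state among all states if for every pure state $\sigma=|\psi\rangle\langle\psi|$ and every state (density matrix) $\varrho$, $M_{\mathcal{Q}}(\sigma)=M_{\mathcal{Q}}(\varrho)$ implies $\varrho=\sigma$. Two measurement schemes $\mathcal{Q},\mathcal{Q}'$ are $\epsilon$-close if $\|M_{\mathcal{Q}}-M_{\mathcal{Q}'}\|_\infty<\epsilon$, where $\|\cdot\|_\infty$ is the operator norm of linear maps $H(d)\to M_{lm}(\mathbb{R})$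 with respect to the fixed norms. *)

From HB Require Import structures.
From mathcomp Require Import all_boot all_order all_algebra.
From mathcomp Require Import complex.
From mathcomp Require Import boolp classical_sets reals.

Set Implicit Arguments.
Unset Strict Implicit.
Unset Printing Implicit Defensive.

Import Order.TTheory GRing.Theory Num.Theory.
Local Open Scope ring_scope.

Section QDefs.
Variable R : realType.
Local Notation C := R[i].

Definition adj (d : nat) (X : 'M[C]_d) : 'M[C]_d := (map_mx Num.conj X)^T.

Definition hermitian (d : nat) (X : 'M[C]_d) : Prop := adj X = X.

Definition psd (d : nat) (X : 'M[C]_d) : Prop :=
  hermitian X /\ forall v : 'cV[C]_d, 0 <= ((map_mx Num.conj v)^T *m X *m v) 0 0.

Definition is_state (d : nat) (rho : 'M[C]_d) : Prop := psd rho /\ \tr rho = 1.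

Definition is_pure_state (d : nat) (sigma : 'M[C]_d) : Prop :=
  exists psi : 'cV[C]_d,
    ((map_mx Num.conj psi)^T *m psi) 0 0 = 1 /\ sigma = psi *m (map_mx Num.conj psi)^T.

Definition is_POVM (d m : nat) (P : 'I_m -> 'M[C]_d) : Prop :=
  (forall j, psd (P j)) /\ \sum_(j < m) P j = 1%:M.

Definition is_scheme (d l m : nat) (Q : 'I_l -> 'I_m -> 'M[C]_d) : Prop :=
  forall i, is_POVM (Q i).

Definition MQ (d l m : nat) (Q : 'I_l -> 'I_m -> 'M[C]_d) (X : 'M[C]_d)
  : 'M[R]_(l, m) := \matrix_(i, j) complex.Re (\tr (X *m Q i j)).

Definition determines_pure (d l m : nat) (Q : 'I_l -> 'I_m -> 'M[C]_d) : Prop :=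
  forall sigma rho : 'M[C]_d, is_pure_state sigma -> is_state rho ->
    MQ Q sigma = MQ Q rho -> rho = sigma.

(* a norm on the real vector space H(d) (only its values on Hermitian
   matrices matter) *)
Definition is_norm_H (d : nat) (N : 'M[C]_d -> R) : Prop :=
  (forall X, hermitian X -> 0 <= N X) /\
  (forall X, hermitian X -> N X = 0 -> X = 0) /\
  (forall (r : R) X, hermitian X -> N ((r%:C)%C *: X) = `|r| * N X) /\
  (forall X Y, hermitian X -> hermitian Y -> N (X + Y) <= N X + N Y).

Definition is_norm_M (l m : nat) (N : 'M[R]_(l, m) -> R) : Prop :=
  (forall A, 0 <= N A) /\
  (forall A, N A = 0 -> A = 0) /\
  (forall (r : R) A, N (r *: A) = `|r| * N A) /\
  (forall A B, N (A + B) <= N A + N B).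

Definition opnorm (d l m : nat) (NH : 'M[C]_d -> R) (NM : 'M[R]_(l, m) -> R)
  (L : 'M[C]_d -> 'M[R]_(l, m)) : R :=
  sup [set NM (L X) | X in [set X : 'M[C]_d | hermitian X /\ NH X <= 1]].

Definition eps_close (d l m : nat) (NH : 'M[C]_d -> R) (NM : 'M[R]_(l, m) -> R)
  (eps : R) (Q Q' : 'I_l -> 'I_m -> 'M[C]_d) : Prop :=
  opnorm NH NM (fun X => MQ Q X - MQ Q' X) < eps.

End QDefs.

From Pilot Require Import Defs.
From HB Require Import structures.
From mathcomp Require Import all_boot all_order all_algebra.
From mathcomp Require Import complex.
From mathcomp Require spectral.
From mathcomp Require Import boolp classical_sets functions reals topology normedtype derive.
From mathcomp Require Import ring lra.

(* Call X a pure deviation at the unit vector psi if X is Hermitian, traceless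
   and positive semidefinite on the orthogonal complement of psi; rho - |psi><psi|
   is one for every state rho.  If Q determines pure states, M_Q kills no nonzero
   pure deviation X: diagonalising X, it has a single negative eigenvalue -mu, and
   with sigma the projector on the corresponding eigenvector, sigma + X / mu is a
   state with the statistics of the pure state sigma.  In real coordinates, the
   pairs (X, psi) with X a pure deviation at psi of l1-norm 1 form a compact set,
   so ||M_Q X|| >= k ||X|| for some k > 0 and all pure deviations X.  If Q' is
   k-close to Q and M_Q' (sigma) = M_Q' (rho) with sigma = |psi><psi|, then
   Y = rho - sigma satisfies M_Q Y = (M_Q - M_Q') Y, so k ||Y|| <= ||M_Q - M_Q'|| ||Y||,
   which forces Y = 0. *)

Set Implicit Arguments.
Unset Strict Implicit.
Unset Printing Implicit Defensive.

Import Order.TTheory GRing.Theory Num.Theory.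
Import numFieldNormedType.Exports.
(* [hermitian] below is that of Defs, not the one of mathcomp's sesquilinear. *)
Import Pilot.Defs.
Local Open Scope ring_scope.

Section Adjoint.
Variable R : realType.
Local Notation C := R[i].

Definition adjm m n (A : 'M[C]_(m, n)) : 'M[C]_(n, m) := (map_mx Num.conj A)^T.
Definition cdot n (u v : 'cV[C]_n) : C := (adjm u *m v) 0 0.
Definition qf n (A : 'M[C]_n) (u : 'cV[C]_n) : C := (adjm u *m A *m u) 0 0.
Definition orth_proj n (p u : 'cV[C]_n) : 'cV[C]_n := u - p *m (adjm p *m u).

Lemma hermitianE n (A : 'M[C]_n) : hermitian A = (adjm A = A).
Proof. by []. Qed.

Lemma adjmE m n (A : 'M[C]_(m, n)) i j : adjm A i j = (A j i)^*.
Proof. by rewrite !mxE. Qed.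

Lemma adjmK m n (A : 'M[C]_(m, n)) : adjm (adjm A) = A.
Proof. by apply/matrixP => i j; rewrite !adjmE conjCK. Qed.

Lemma adjmM m n p (A : 'M[C]_(m, n)) (B : 'M[C]_(n, p)) :
  adjm (A *m B) = adjm B *m adjm A.
Proof.
apply/matrixP => i j; rewrite !mxE rmorph_sum; apply: eq_bigr => k _.
by rewrite !mxE rmorphM mulrC.
Qed.

Lemma adjmD m n (A B : 'M[C]_(m, n)) : adjm (A + B) = adjm A + adjm B.
Proof. by apply/matrixP => i j; rewrite !mxE rmorphD. Qed.

Lemma adjmN m n (A : 'M[C]_(m, n)) : adjm (- A) = - adjm A.
Proof. by apply/matrixP => i j; rewrite !mxE rmorphN. Qed.

Lemma adjmZ m n c (A : 'M[C]_(m, n)) : adjm (c *: A) = c^* *: adjm A.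
Proof. by apply/matrixP => i j; rewrite !mxE rmorphM. Qed.

Lemma adjm_delta n (k : 'I_n) : adjm (delta_mx k 0) = delta_mx 0 k :> 'rV[C]_n.
Proof. by apply/matrixP => i j; rewrite !mxE rmorph_nat andbC. Qed.

Lemma adjm_diag n (D : 'rV[C]_n) : adjm (diag_mx D) = diag_mx (map_mx Num.conj D).
Proof. by rewrite /adjm map_diag_mx tr_diag_mx. Qed.

Lemma conj_real (r : R) : ((r%:C)%C : C)^* = (r%:C)%C.
Proof. by apply/eqP; rewrite eq_complex /= oppr0 !eqxx. Qed.

Lemma Re_realM (r : R) (x : C) : complex.Re ((r%:C)%C * x) = r * complex.Re x.
Proof. by case: x => a b /=; rewrite mul0r subr0. Qed.

Lemma Im_realM (r : R) (x : C) : complex.Im ((r%:C)%C * x) = r * complex.Im x.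
Proof. by case: x => a b /=; rewrite mul0r addr0. Qed.

Lemma real_complexRe (x : C) : x \is Num.real -> x = ((complex.Re x)%:C)%C.
Proof.
case: x => a b; rewrite realE !lecE /= => /orP[] /andP[/eqP b0 _].
  by rewrite b0.
by rewrite -b0.
Qed.

Lemma hermitian0 n : hermitian (0 : 'M[C]_n).
Proof. by rewrite hermitianE; apply/matrixP => i j; rewrite !mxE rmorph0. Qed.

Lemma hermitianD n (A B : 'M[C]_n) : hermitian A -> hermitian B -> hermitian (A + B).
Proof. by rewrite !hermitianE adjmD => -> ->. Qed.

Lemma hermitianN n (A : 'M[C]_n) : hermitian A -> hermitian (- A).
Proof. by rewrite !hermitianE adjmN => ->. Qed.

Lemma hermitianZ n (r : R) (A : 'M[C]_n) : hermitian A -> hermitian ((r%:C)%C *: A).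
Proof. by rewrite !hermitianE adjmZ conj_real => ->. Qed.

Lemma hermitian_outer n (v : 'cV[C]_n) : hermitian (v *m adjm v).
Proof. by rewrite hermitianE adjmM adjmK. Qed.

Lemma qfD n (A B : 'M[C]_n) u : qf (A + B) u = qf A u + qf B u.
Proof. by rewrite /qf mulmxDr mulmxDl mxE. Qed.

Lemma qfN n (A : 'M[C]_n) u : qf (- A) u = - qf A u.
Proof. by rewrite /qf mulmxN mulNmx mxE. Qed.

Lemma qfZ n c (A : 'M[C]_n) u : qf (c *: A) u = c * qf A u.
Proof. by rewrite /qf -scalemxAr -scalemxAl mxE. Qed.

Lemma qf_outer n (v u : 'cV[C]_n) : qf (v *m adjm v) u = `|cdot v u| ^+ 2.
Proof.
rewrite /qf /cdot normCKC !mulmxA -mulmxA -[adjm u *m v]adjmK adjmM adjmK.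
by rewrite mxE big_ord1 adjmE.
Qed.

Lemma qf_real n (A : 'M[C]_n) u : hermitian A -> qf A u \is Num.real.
Proof.
rewrite hermitianE => hA; apply/CrealP.
by rewrite -adjmE /qf !adjmM adjmK hA mulmxA.
Qed.

Lemma cdotDZ n (b v w : 'cV[C]_n) a c :
  cdot b (a *: v + c *: w) = a * cdot b v + c * cdot b w.
Proof. by rewrite /cdot mulmxDr -!scalemxAr [LHS]mxE; congr (_ + _); rewrite mxE. Qed.

Lemma cdot_delta n (b : 'cV[C]_n) k : cdot b (delta_mx k 0) = (b k 0)^*.
Proof.
rewrite /cdot mxE (bigD1 k) //= big1 => [|j /negPf jk]; rewrite !mxE ?jk ?eqxx.
  by rewrite mulr1 addr0.
by rewrite mulr0.
Qed.

Lemma Re_cdot_self n (p : 'cV[C]_n) :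
  complex.Re (cdot p p) = \sum_i (complex.Re (p i 0) ^+ 2 + complex.Im (p i 0) ^+ 2).
Proof.
rewrite /cdot mxE raddf_sum; apply: eq_bigr => i _.
by rewrite adjmE; case: (p i 0) => a b /=; rewrite mulNr opprK !expr2.
Qed.

Lemma adjm_mulmx_cV n (p u : 'cV[C]_n) : adjm p *m u = (cdot p u)%:M.
Proof. by apply/matrixP => i j; rewrite !ord1 [RHS]mxE eqxx mulr1n. Qed.

Lemma cdot_orth_proj n (p u : 'cV[C]_n) : cdot p p = 1 -> cdot p (orth_proj p u) = 0.
Proof.
move=> p1; rewrite {1}/cdot /orth_proj mulmxBr !mulmxA [adjm p *m p]adjm_mulmx_cV p1.
by rewrite mul1mx subrr mxE.
Qed.

Lemma orth_proj_id n (p u : 'cV[C]_n) : cdot p u = 0 -> orth_proj p u = u.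
Proof. by move=> pu; rewrite /orth_proj adjm_mulmx_cV pu mul_mx_scalar scale0r subr0. Qed.

End Adjoint.
Section RealLinear.
Variable R : realType.
Local Notation C := R[i].

Definition real_linear (W : lmodType R) n (L : 'M[C]_n -> W) :=
  forall (r : R) X Y, L ((r%:C)%C *: X + Y) = r *: L X + L Y.

Variables (W : lmodType R) (n : nat) (L : 'M[C]_n -> W).
Hypothesis L_lin : real_linear L.

Lemma real_linear0 : L 0 = 0.
Proof.
have := L_lin 1 0 0; rewrite scaler0 addr0 scale1r => /eqP.
by rewrite -subr_eq0 opprD addrA subrr sub0r oppr_eq0 => /eqP.
Qed.

Lemma real_linearD X Y : L (X + Y) = L X + L Y.
Proof. by have := L_lin 1 X Y; rewrite rmorph1 !scale1r. Qed.

Lemma real_linearZ (r : R) X : L ((r%:C)%C *: X) = r *: L X.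
Proof. by have := L_lin r X 0; rewrite !addr0 real_linear0 addr0. Qed.

Lemma real_linearB X Y : L (X - Y) = L X - L Y.
Proof.
have -> : X - Y = ((-1)%:C)%C *: Y + X by rewrite rmorphN1 scaleN1r addrC.
by rewrite L_lin scaleN1r addrC.
Qed.

End RealLinear.

Lemma real_linear_sub (R : realType) (W : lmodType R) n (L1 L2 : 'M[R[i]]_n -> W) :
  real_linear L1 -> real_linear L2 -> real_linear (fun X => L1 X - L2 X).
Proof. by move=> h1 h2 r X Y; rewrite h1 h2 scalerBr addrACA opprD. Qed.

Lemma MQ_real_linear (R : realType) d l m (Q : 'I_l -> 'I_m -> 'M[R[i]]_d) :
  real_linear (MQ Q).
Proof.
move=> r X Y; apply/matrixP => i j.
by rewrite !mxE mulmxDl -scalemxAl mxtraceD mxtraceZ raddfD /= Re_realM.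
Qed.

Section Spectral.
Variables (R : realType) (n : nat).
Local Notation C := R[i].
Implicit Types (U : 'M[C]_n) (D : 'rV[C]_n) (w : 'cV[C]_n).

Definition diag_form D w : C := \sum_k D 0 k * `|w k 0| ^+ 2.

Lemma qf_unitary_diag U D u :
  qf (adjm U *m diag_mx D *m U) u = diag_form D (U *m u).
Proof.
rewrite /qf !mulmxA -adjmM -mulmxA mxE; apply: eq_bigr => k _.
by rewrite mul_mx_diag !mxE normCKC mulrCA mulrA.
Qed.

Lemma diag_form_delta D k : diag_form D (delta_mx k 0) = D 0 k.
Proof.
rewrite /diag_form (bigD1 k) //= big1 => [|j /negPf jk]; rewrite mxE ?jk ?eqxx.
  by rewrite normr1 expr1n mulr1 addr0.
by rewrite normr0 expr0n mulr0.
Qed.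

Lemma diag_form_delta2 D i j a b : i != j ->
  diag_form D (a *: delta_mx i 0 + b *: delta_mx j 0) =
  D 0 i * `|a| ^+ 2 + D 0 j * `|b| ^+ 2.
Proof.
move=> /negPf ij; have ji : (j == i) = false by rewrite eq_sym.
rewrite /diag_form (bigD1 i) // (bigD1 j) 1?eq_sym ?ij //= big1 => [|k /andP[/negPf ki /negPf kj]].
  by rewrite !mxE !eqxx ij ji !mulr1 !mulr0 addr0 add0r addr0.
by rewrite !mxE ki kj !mulr0 addr0 normr0 expr0n mulr0.
Qed.

Lemma hermitian_unitary_diag (X : 'M[C]_n) : hermitian X ->
  exists U D, [/\ U *m adjm U = 1%:M, forall k, D 0 k \is Num.real
                & X = adjm U *m diag_mx D *m U].
Proof.
move=> hX.
have nX : X \is spectral.normalmx.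
  by rewrite qualifE -map_trmx; move: hX; rewrite hermitianE /adjm => ->.
set U := spectral.spectralmx X; set D := spectral.spectral_diag X.
have uU := spectral.spectral_unitarymx X.
have adjU : invmx U = adjm U by rewrite spectral.invmx_unitary // /adjm map_trmx.
have UU : U *m adjm U = 1%:M by rewrite -adjU mulmxV // spectral.unitarymx_unit.
have XE : X = adjm U *m diag_mx D *m U.
  by rewrite -adjU; apply/spectral.orthomx_spectralP.
exists U, D; split => // k.
have := qf_real (adjm U *m delta_mx k 0) hX.
by rewrite XE qf_unitary_diag mulmxA UU mul1mx diag_form_delta.
Qed.

End Spectral.

Section PureDeviation.
Variables (R : realType) (n : nat).
Local Notation C := R[i].
Implicit Types (U X : 'M[C]_n) (D : 'rV[C]_n) (psi p u v w : 'cV[C]_n).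

Definition pure_deviation psi X : Prop :=
  [/\ hermitian X, \tr X = 0 & forall u, cdot psi u = 0 -> 0 <= qf X u].

Lemma pure_deviation_sub psi rho : cdot psi psi = 1 -> is_state rho ->
  pure_deviation psi (rho - psi *m adjm psi).
Proof.
move=> psi1 [[hrho rho_ge0] trrho]; split.
- exact/hermitianD/hermitianN/hermitian_outer.
- by rewrite raddfB /= trrho mxtrace_mulC /mxtrace big_ord1 -/(cdot psi psi) psi1 subrr.
- by move=> u psi_u; rewrite qfD qfN qf_outer psi_u normr0 expr0n subr0; apply: rho_ge0.
Qed.

Lemma pure_deviation_orth_proj p X : cdot p p = 1 ->
  pure_deviation p X <-> [/\ hermitian X, \tr X = 0 & forall u, 0 <= qf X (orth_proj p u)].
Proof.
move=> p1; split=> -[hX trX X_ge0]; split => // u.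
  exact/X_ge0/cdot_orth_proj.
by move=> pu; rewrite -(orth_proj_id pu).
Qed.

Lemma unitary_diag_neg_unique U D psi k0 k :
    U *m adjm U = 1%:M -> (forall k, D 0 k \is Num.real) ->
    (forall u, cdot psi u = 0 -> 0 <= qf (adjm U *m diag_mx D *m U) u) ->
  D 0 k0 < 0 -> k != k0 -> 0 <= D 0 k.
Proof.
move=> UU Dr X_ge0 Dk0 kk0; set b := U *m psi.
have b_ge0 w : cdot b w = 0 -> 0 <= diag_form D w.
  move=> bw; have := X_ge0 (adjm U *m w).
  by rewrite qf_unitary_diag mulmxA UU mul1mx; apply; rewrite /cdot mulmxA -adjmM.
rewrite real_leNgt ?Dr ?real0 //; apply/negP => Dk.
suff [w /b_ge0 /le_gtF ->] : exists2 w, cdot b w = 0 & diag_form D w < 0 by [].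
(* the form is negative definite on span(e_k0, e_k), which meets b^perp *)
have [bk0 | bk_neq0] := eqVneq (b k 0) 0.
  by exists (delta_mx k 0); rewrite ?cdot_delta ?bk0 ?conjC0 ?diag_form_delta.
exists ((b k 0)^* *: delta_mx k0 0 + (- (b k0 0)^*) *: delta_mx k 0).
  by rewrite cdotDZ !cdot_delta mulNr mulrC subrr.
rewrite diag_form_delta2 1?eq_sym // normrN !norm_conjC.
have neg0 : D 0 k0 * `|b k 0| ^+ 2 < 0 by rewrite pmulr_llt0 // exprn_gt0 ?normr_gt0.
have npos1 : D 0 k * `|b k0 0| ^+ 2 <= 0 by rewrite nmulr_rle0 // exprn_ge0.
by have := ltr_leD neg0 npos1; rewrite addr0.
Qed.

Lemma unitary_diag_state U D : U *m adjm U = 1%:M ->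
  (forall k, 0 <= D 0 k) -> \sum_k D 0 k = 1 -> is_state (adjm U *m diag_mx D *m U).
Proof.
move=> UU D_ge0 D1; split; first split.
- rewrite hermitianE !adjmM adjmK adjm_diag mulmxA; congr (_ *m diag_mx _ *m _).
  by apply/matrixP => i j; rewrite mxE ord1 geC0_conj.
- move=> u; rewrite -/(qf _ u) qf_unitary_diag; apply: sumr_ge0 => k _.
  by rewrite mulr_ge0 ?exprn_ge0.
- by rewrite mxtrace_mulC mulmxA UU mul1mx mxtrace_diag.
Qed.

Lemma unitary_diag_delta U k (v := adjm U *m (delta_mx k 0 : 'cV[C]_n)) :
  adjm U *m diag_mx (delta_mx 0 k) *m U = v *m adjm v.
Proof.
rewrite /v adjmM adjmK adjm_delta -!mulmxA; congr (_ *m _).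
rewrite mulmxA mul_delta_mx; congr (_ *m _).
apply/matrixP => i j; rewrite !mxE eqxx /=.
by case: (eqVneq i k) => [->|] /=; rewrite ?mul0rn // eq_sym; case: eqP.
Qed.

Lemma unitary_diag_shift_state U D k0 :
    U *m adjm U = 1%:M -> D 0 k0 < 0 -> (forall k, k != k0 -> 0 <= D 0 k) ->
    \sum_k D 0 k = 0 ->
  exists2 sigma, is_pure_state sigma &
    is_state (sigma + (- D 0 k0)^-1 *: (adjm U *m diag_mx D *m U)).
Proof.
move=> UU Dk0 D_ge0 trD; set c := (- D 0 k0)^-1.
have c_gt0 : 0 < c by rewrite invr_gt0 oppr_gt0.
set D' := delta_mx 0 k0 + c *: D.
have D'E k : D' 0 k = (k == k0)%:R + c * D 0 k by rewrite !mxE eqxx.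
set v := adjm U *m (delta_mx k0 0 : 'cV[C]_n).
exists (v *m adjm v).
  exists v; split => //; change (cdot v v = 1).
  rewrite /cdot /v adjmM adjmK adjm_delta mulmxA -(mulmxA _ U) UU mulmx1.
  by rewrite mul_delta_mx mxE eqxx.
rewrite -unitary_diag_delta scalemxAl scalemxAr -mulmxDl -mulmxDr -linearZ -linearD.
apply: unitary_diag_state => // [k|].
  rewrite D'E; have [-> | kk0] := eqVneq k k0.
    by rewrite /c invrN mulNr mulVf ?subrr // lt_eqF.
  by rewrite mulr0n add0r; apply: mulr_ge0; [exact: ltW | exact: D_ge0].
rewrite -/D' (eq_bigr _ (fun k _ => D'E k)) big_split /= -mulr_sumr trD mulr0 addr0.
by rewrite (bigD1 k0) //= eqxx big1 ?addr0 // => k /negPf ->.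
Qed.

End PureDeviation.

Lemma determines_pure_deviation (R : realType) d l m (Q : 'I_l -> 'I_m -> 'M[R[i]]_d)
    psi X :
  determines_pure Q -> pure_deviation psi X -> MQ Q X = 0 -> X = 0.
Proof.
move=> dQ [hX trX X_ge0] MX.
have [U [D [UU Dr XE]]] := hermitian_unitary_diag hX.
have trD : \sum_k D 0 k = 0.
  by move: trX; rewrite XE mxtrace_mulC mulmxA UU mul1mx mxtrace_diag.
have [[k0 Dk0] | D_ge0] := pselect (exists k, D 0 k < 0); last first.
  have {}D_ge0 k : 0 <= D 0 k.
    by rewrite real_leNgt ?Dr ?real0 //; apply/negP => Dk; apply: D_ge0; exists k.
  have D0 : D = 0.
    by apply/rowP => k; rewrite mxE; apply: (psumr_eq0P (fun k _ => D_ge0 k) trD).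
  by rewrite XE D0 linear0 mulmx0 mul0mx.
rewrite XE in X_ge0.
have D_ge0 k : k != k0 -> 0 <= D 0 k := unitary_diag_neg_unique UU Dr X_ge0 Dk0.
have [sigma sigma_pure rho_state] := unitary_diag_shift_state UU Dk0 D_ge0 trD.
rewrite -XE in rho_state.
have c_gt0 : 0 < (- D 0 k0)^-1 by rewrite invr_gt0 oppr_gt0.
have := dQ _ _ sigma_pure rho_state.
rewrite (real_complexRe (gtr0_real c_gt0)) real_linearD ?real_linearZ; try exact: MQ_real_linear.
rewrite MX scaler0 addr0 => /(_ erefl) /eqP.
rewrite -subr_eq0 (addrC sigma) addrK scaler_eq0 -real_complexRe ?gtr0_real //.
by rewrite gt_eqF //= => /eqP.
Qed.

Lemma ler_sum_term (R : numDomainType) (I : finType) (F : I -> R) i0 :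
  (forall i, 0 <= F i) -> F i0 <= \sum_i F i.
Proof. by move=> F_ge0; rewrite (bigD1 i0) //= lerDl sumr_ge0. Qed.

Section L1Norm.
Variable R : realType.
Local Notation C := R[i].

Definition l1 m n (A : 'M[C]_(m, n)) : R :=
  \sum_i \sum_j (`|complex.Re (A i j)| + `|complex.Im (A i j)|).

Lemma l1_entry_le m n (A : 'M[C]_(m, n)) i j :
  `|complex.Re (A i j)| + `|complex.Im (A i j)| <= l1 A.
Proof.
have ge0 i' j' : 0 <= `|complex.Re (A i' j')| + `|complex.Im (A i' j')| by rewrite addr_ge0.
apply: le_trans (ler_sum_term i _) => [|i']; last exact: sumr_ge0.
exact: ler_sum_term.
Qed.

Lemma l1_0 m n : l1 (0 : 'M[C]_(m, n)) = 0.
Proof. by rewrite /l1 big1 // => i _; rewrite big1 // => j _; rewrite mxE /= normr0 addr0. Qed.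

Lemma l1_gt0 m n (A : 'M[C]_(m, n)) : A != 0 -> 0 < l1 A.
Proof.
move=> /eqP A_neq0; have [[i [j Aij]] | A0] := pselect (exists i j, A i j != 0).
  apply: lt_le_trans (l1_entry_le A i j); move: Aij.
  by case: (A i j) => a b; rewrite eq_complex negb_and /= => /orP[] ?;
    [apply: ltr_wpDr | apply: ltr_wpDl]; rewrite ?normr_gt0.
exfalso; apply: A_neq0; apply/matrixP => i j; rewrite mxE.
by have [// | Aij] := eqVneq (A i j) 0; exfalso; apply: A0; exists i, j.
Qed.

Lemma l1Z m n (r : R) (A : 'M[C]_(m, n)) : 0 <= r -> l1 ((r%:C)%C *: A) = r * l1 A.
Proof.
move=> r_ge0; rewrite /l1 mulr_sumr; apply: eq_bigr => i _.
rewrite mulr_sumr; apply: eq_bigr => j _; rewrite mxE Re_realM.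
by rewrite Im_realM !normrM ger0_norm // mulrDr.
Qed.

End L1Norm.

Section ComplexContinuity.
Local Open Scope classical_set_scope.
Variables (R : realType) (T : topologicalType).
Local Notation C := R[i].

Lemma continuous_sum I (r : seq I) (P : pred I) (F : I -> T -> R) :
  (forall i, continuous (F i)) -> continuous (fun t => \sum_(i <- r | P i) F i t).
Proof.
move=> cF; rewrite -fct_sumE; apply: (big_ind (fun f : T -> R => continuous f)) => //.
  exact: cst_continuous.
by move=> f g cf cg t; exact: (continuousD (cf t) (cg t)).
Qed.

Lemma closed_eqR (f g : T -> R) : continuous f -> continuous g ->
  closed [set t | f t = g t].
Proof.
move=> cf cg; have -> : [set t | f t = g t] = (fun t => f t - g t) @^-1` [set x | x = 0].
  by apply/seteqP; split => t /= => [->|/eqP]; rewrite ?subrr // subr_eq0 => /eqP.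
by apply: preimage_closed; [move=> t _; exact: (continuousB (cf t) (cg t)) | exact: closed_eq].
Qed.

Lemma closed_leR (f g : T -> R) : continuous f -> continuous g ->
  closed [set t | f t <= g t].
Proof.
move=> cf cg; have -> : [set t | f t <= g t] = (fun t => g t - f t) @^-1` [set x | 0 <= x].
  by apply/seteqP; split => t /=; rewrite subr_ge0.
by apply: preimage_closed; [move=> t _; exact: (continuousB (cg t) (cf t)) | exact: closed_ge].
Qed.

Definition ccont (f : T -> C) :=
  continuous (fun t => complex.Re (f t)) /\ continuous (fun t => complex.Im (f t)).

Lemma ccont_cst (c : C) : ccont (fun=> c).
Proof. by split; apply: cst_continuous. Qed.

Lemma ccont_Complex (f g : T -> R) : continuous f -> continuous g ->
  ccont (fun t => Complex (f t) (g t)).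
Proof. by []. Qed.

Lemma ccontD (f g : T -> C) : ccont f -> ccont g -> ccont (fun t => f t + g t).
Proof.
move=> [f1 f2] [g1 g2]; split.
  rewrite (_ : (fun t => _) = (fun t => complex.Re (f t) + complex.Re (g t))).
    by move=> t; exact: (continuousD (f1 t) (g1 t)).
  by apply/funext => t; rewrite raddfD.
rewrite (_ : (fun t => _) = (fun t => complex.Im (f t) + complex.Im (g t))).
  by move=> t; exact: (continuousD (f2 t) (g2 t)).
by apply/funext => t; rewrite raddfD.
Qed.

Lemma ccontN (f : T -> C) : ccont f -> ccont (fun t => - f t).
Proof.
move=> [f1 f2]; split.
  rewrite (_ : (fun t => _) = (fun t => - complex.Re (f t))).
    by move=> t; exact: (continuousN (f1 t)).
  by apply/funext => t; rewrite raddfN.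
rewrite (_ : (fun t => _) = (fun t => - complex.Im (f t))).
  by move=> t; exact: (continuousN (f2 t)).
by apply/funext => t; rewrite raddfN.
Qed.

Lemma ccontM (f g : T -> C) : ccont f -> ccont g -> ccont (fun t => f t * g t).
Proof.
move=> [f1 f2] [g1 g2]; split => t.
  have -> : (fun t => complex.Re (f t * g t)) = (fun t =>
      complex.Re (f t) * complex.Re (g t) - complex.Im (f t) * complex.Im (g t)).
    by apply/funext => s; case: (f s) => ? ?; case: (g s).
  exact: (continuousB (continuousM (f1 t) (g1 t)) (continuousM (f2 t) (g2 t))).
have -> : (fun t => complex.Im (f t * g t)) = (fun t =>
    complex.Re (f t) * complex.Im (g t) + complex.Im (f t) * complex.Re (g t)).
  by apply/funext => s; case: (f s) => ? ?; case: (g s) => ? ? /=; rewrite addrC.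
exact: (continuousD (continuousM (f1 t) (g2 t)) (continuousM (f2 t) (g1 t))).
Qed.

Lemma ccont_conj (f : T -> C) : ccont f -> ccont (fun t => (f t)^*).
Proof.
move=> [f1 f2]; split.
  by rewrite (_ : (fun t => _) = (fun t => complex.Re (f t))) //; apply/funext => t; case: (f t).
rewrite (_ : (fun t => _) = (fun t => - complex.Im (f t))); last first.
  by apply/funext => t; case: (f t).
by move=> t; exact: (continuousN (f2 t)).
Qed.

Lemma ccont_sum I (r : seq I) (P : pred I) (F : I -> T -> C) :
  (forall i, ccont (F i)) -> ccont (fun t => \sum_(i <- r | P i) F i t).
Proof.
move=> cF; rewrite -fct_sumE; apply: (big_ind (fun f : T -> C => ccont f)) => //.
  exact: ccont_cst.
by move=> f g cf cg; apply: ccontD.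
Qed.

Lemma closed_ceq (f g : T -> C) : ccont f -> ccont g -> closed [set t | f t = g t].
Proof.
move=> [f1 f2] [g1 g2].
have -> : [set t | f t = g t] = [set t | complex.Re (f t) = complex.Re (g t)] `&`
                               [set t | complex.Im (f t) = complex.Im (g t)].
  apply/seteqP; split => t /=; first by move->.
  by case: (f t) => ? ?; case: (g t) => ? ? /= [-> ->].
by apply: closedI; apply: closed_eqR.
Qed.

Lemma closed_cle (f g : T -> C) : ccont f -> ccont g -> closed [set t | f t <= g t].
Proof.
move=> [f1 f2] [g1 g2].
have -> : [set t | f t <= g t] = [set t | complex.Im (g t) = complex.Im (f t)] `&`
                                [set t | complex.Re (f t) <= complex.Re (g t)].
  apply/seteqP; split => t /=; first by rewrite lecE => /andP[/eqP].
  by move=> [ImE ReE]; rewrite lecE ImE eqxx ReE.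
by apply: closedI; [apply: closed_eqR | apply: closed_leR].
Qed.

Definition mxcont p q (F : T -> 'M[C]_(p, q)) := forall i j, ccont (fun t => F t i j).

Lemma mxcont_cst p q (A : 'M[C]_(p, q)) : mxcont (fun=> A).
Proof. by move=> i j; apply: ccont_cst. Qed.

Lemma mxcontD p q (F G : T -> 'M[C]_(p, q)) : mxcont F -> mxcont G ->
  mxcont (fun t => F t + G t).
Proof.
by move=> cF cG i j; rewrite (_ : (fun t => _) = (fun t => F t i j + G t i j));
  [apply: ccontD | apply/funext => t; rewrite mxE].
Qed.

Lemma mxcontN p q (F : T -> 'M[C]_(p, q)) : mxcont F -> mxcont (fun t => - F t).
Proof.
by move=> cF i j; rewrite (_ : (fun t => _) = (fun t => - F t i j));
  [apply: ccontN | apply/funext => t; rewrite mxE].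
Qed.

Lemma mxcontM p q r (F : T -> 'M[C]_(p, q)) (G : T -> 'M[C]_(q, r)) :
  mxcont F -> mxcont G -> mxcont (fun t => F t *m G t).
Proof.
move=> cF cG i j; rewrite (_ : (fun t => _) = (fun t => \sum_k F t i k * G t k j)).
  by apply: ccont_sum => k; apply: ccontM.
by apply/funext => t; rewrite mxE.
Qed.

Lemma mxcont_adjm p q (F : T -> 'M[C]_(p, q)) : mxcont F -> mxcont (fun t => adjm (F t)).
Proof.
by move=> cF i j; rewrite (_ : (fun t => _) = (fun t => (F t j i)^*));
  [apply: ccont_conj | apply/funext => t; rewrite adjmE].
Qed.

Lemma closed_mxeq p q (F G : T -> 'M[C]_(p, q)) : mxcont F -> mxcont G ->
  closed [set t | F t = G t].
Proof.
move=> cF cG.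
have -> : [set t | F t = G t] = \bigcap_(ij in [set: 'I_p * 'I_q])
                                  [set t | F t ij.1 ij.2 = G t ij.1 ij.2].
  apply/seteqP; split => [t /= FG [i j] _ | t /= FG]; first by rewrite /= FG.
  by apply/matrixP => i j; apply: (FG (i, j)).
by apply: closed_bigI => -[i j] _; apply: closed_ceq.
Qed.

Lemma continuous_l1 p q (F : T -> 'M[C]_(p, q)) : mxcont F -> continuous (fun t => l1 (F t)).
Proof.
move=> cF; apply: continuous_sum => i; apply: continuous_sum => j t.
have [cRe cIm] := cF i j.
exact: (continuousD (continuous_comp (cRe t) (@norm_continuous _ R^o _))
                    (continuous_comp (cIm t) (@norm_continuous _ R^o _))).
Qed.

End ComplexContinuity.

Lemma lipschitz_continuous (R : realType) (V : normedModType R) (f : V -> R) (L : R) :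
  (forall x y, `|f x - f y| <= L * `|x - y|) -> continuous f.
Proof.
move=> Lf x; apply/(@cvgrPdist_lt _ _ _ _ (nbhs_filter x)) => e e_gt0.
have L1_gt0 : 0 < `|L| + 1 by rewrite ltr_wpDl.
apply/(nbhs_normP x (fun y => `|f x - f y| < e)); exists (e / (`|L| + 1)).
  by rewrite /= divr_gt0.
move=> y /= xy; apply: (le_lt_trans (Lf x y)).
apply: (@le_lt_trans _ _ ((`|L| + 1) * `|x - y|)).
  by rewrite ler_wpM2r // (le_trans (ler_norm L)) // lerDl.
by rewrite mulrC -ltr_pdivlMr.
Qed.

Lemma compact_lb_gt0 (R : realType) (T : topologicalType) (A : set T) (f : T -> R) :
  compact A -> continuous f -> (forall t, A t -> 0 < f t) ->
  exists2 c, 0 < c & forall t, A t -> c <= f t.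
Proof.
move=> cA cf f_gt0; have [[t0 At0] | A0] := pselect (exists t, A t); last first.
  by exists 1 => // t At; exfalso; apply: A0; exists t.
have [|c /[!inE] Ac c_min] := compact_EVT_min _ cA (continuous_subspaceT cf).
  by exists t0.
by exists (f c) => [|t At]; [apply: f_gt0 | apply: c_min; rewrite inE].
Qed.

Section Seminorm.
Variables (R : realType) (n : nat).
Local Notation V := 'rV[R]_n.

Lemma coord_le_norm (z : V) k : `|z 0 k| <= `|z|.
Proof.
rewrite [leRHS]/Num.norm /= mx_normrE.
exact: (le_bigmax _ (fun ij => `|z ij.1 ij.2|) (0, k)).
Qed.

Lemma norm_le_coord (z : V) c : 0 <= c -> (forall k, `|z 0 k| <= c) -> `|z| <= c.
Proof.
move=> c_ge0 zc; rewrite [leLHS]/Num.norm /= mx_normrE.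
by apply: bigmax_le => // -[i k] _ /=; rewrite ord1.
Qed.

Variable f : V -> R.
Hypotheses (fD : forall z w, f (z + w) <= f z + f w)
           (fZ : forall r z, f (r *: z) = `|r| * f z).

Lemma seminorm_ge0 z : 0 <= f z.
Proof.
have f0 : f 0 = 0 by rewrite -(scale0r z) fZ normr0 mul0r.
have := fD z (- z); rewrite subrr f0 -scaleN1r fZ normrN normr1 mul1r.
lra.
Qed.

Lemma seminorm_le z : f z <= (\sum_k f (delta_mx 0 k)) * `|z|.
Proof.
rewrite {1}(row_sum_delta z) mulr_suml.
elim/big_rec2: _ => [|k y1 y2 _ IH].
  by rewrite -(scale0r (0 : V)) fZ normr0 mul0r.
apply: (le_trans (fD _ _)); apply: lerD IH.
by rewrite fZ mulrC ler_wpM2l ?seminorm_ge0 ?coord_le_norm.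
Qed.

Lemma seminorm_norm_le1 z : `|z| <= 1 -> f z <= \sum_k f (delta_mx 0 k).
Proof.
move=> z_le1; apply: le_trans (seminorm_le z) _.
by rewrite ler_piMr // sumr_ge0 // => k _; apply: seminorm_ge0.
Qed.

Lemma seminorm_continuous : continuous f.
Proof.
apply: (@lipschitz_continuous _ _ _ (\sum_k f (delta_mx 0 k))) => z w.
have fzw : f z <= f w + f (z - w) by rewrite -{1}(subrKC w z) fD.
have fwz : f w <= f z + f (z - w).
  have -> : f (z - w) = f (w - z) by rewrite -opprB -scaleN1r fZ normrN normr1 mul1r.
  by rewrite -{1}(subrKC z w) fD.
apply: le_trans (seminorm_le (z - w)); rewrite ler_norml; apply/andP; split; lra.
Qed.

End Seminorm.

Section Coordinates.
Local Open Scope classical_set_scope.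
Variables (R : realType) (d : nat).
Local Notation C := R[i].

Definition coord_index := (('I_d * 'I_d + 'I_d) * bool)%type.
Local Notation V := 'rV[R]_#|{: coord_index}|.

Definition centry (z : V) a : C :=
  Complex (z 0 (enum_rank (a, false))) (z 0 (enum_rank (a, true))).
Definition Xz (z : V) : 'M[C]_d := \matrix_(i, j) centry z (inl (i, j)).
Definition Pz (z : V) : 'cV[C]_d := \col_i centry z (inr i).
(* Hermitian for every z, so that norms on H(d) pull back to seminorms on V;
   on herm_sphere it is 2 Xz z. *)
Definition Hz (z : V) : 'M[C]_d := Xz z + adjm (Xz z).

Definition entry_of (X : 'M[C]_d) (p : 'cV[C]_d) a : C :=
  match a with inl (i, j) => X i j | inr i => p i 0 end.

Definition coords X p : V :=
  \row_k let: (a, b) := enum_val k in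
    if b then complex.Im (entry_of X p a) else complex.Re (entry_of X p a).

Definition herm_sphere := [set z : V |
  [/\ hermitian (Xz z), l1 (Xz z) = 1 & cdot (Pz z) (Pz z) <= 1]].

Definition deviation_sphere := [set z : V |
  [/\ herm_sphere z, cdot (Pz z) (Pz z) = 1, \tr (Hz z) = 0 &
      forall u, 0 <= qf (Hz z) (orth_proj (Pz z) u)]].

Lemma centry_coords X p a : centry (coords X p) a = entry_of X p a.
Proof. by rewrite /centry !mxE !enum_rankK /=; case: entry_of. Qed.

Lemma Xz_coords X p : Xz (coords X p) = X.
Proof. by apply/matrixP => i j; rewrite mxE centry_coords. Qed.

Lemma Pz_coords X p : Pz (coords X p) = p.
Proof. by apply/matrixP => i j; rewrite mxE centry_coords ord1. Qed.

Lemma centryD z w a : centry (z + w) a = centry z a + centry w a.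
Proof. by rewrite /centry !mxE. Qed.

Lemma centryZ (r : R) z a : centry (r *: z) a = (r%:C)%C * centry z a.
Proof. by apply/eqP; rewrite eq_complex Re_realM Im_realM /= !mxE !eqxx. Qed.

Lemma HzD z w : Hz (z + w) = Hz z + Hz w.
Proof.
rewrite /Hz; have -> : Xz (z + w) = Xz z + Xz w.
  by apply/matrixP => i j; rewrite !mxE centryD.
by rewrite adjmD addrACA.
Qed.

Lemma HzZ (r : R) z : Hz (r *: z) = (r%:C)%C *: Hz z.
Proof.
rewrite /Hz; have -> : Xz (r *: z) = (r%:C)%C *: Xz z.
  by apply/matrixP => i j; rewrite !mxE centryZ.
by rewrite adjmZ conj_real scalerDr.
Qed.

Lemma hermitian_Hz z : hermitian (Hz z).
Proof. by rewrite hermitianE /Hz adjmD adjmK addrC. Qed.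

Lemma mxcont_Xz : mxcont Xz.
Proof.
move=> i j; rewrite (_ : (fun z => _) = fun z => centry z (inl (i, j))).
  by apply: ccont_Complex; apply: coord_continuous.
by apply/funext => z; rewrite mxE.
Qed.

Lemma mxcont_Pz : mxcont Pz.
Proof.
move=> i j; rewrite (_ : (fun z => _) = fun z => centry z (inr i)).
  by apply: ccont_Complex; apply: coord_continuous.
by apply/funext => z; rewrite mxE.
Qed.

Lemma herm_sphere_coord_le1 z k : herm_sphere z -> `|z 0 k| <= 1.
Proof.
case=> _ l1X pp; rewrite -[k]enum_valK; case: (enum_val k) => a b.
have -> : z 0 (enum_rank (a, b)) =
    (if b then @complex.Im R else @complex.Re R) (centry z a) by case: b.
case: a => [[i j] | i].
  have := l1_entry_le (Xz z) i j; rewrite l1X mxE.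
  by case: b => /=; apply: le_trans; rewrite ?lerDr ?lerDl.
have : (if b then @complex.Im R else @complex.Re R) (Pz z i 0) ^+ 2 <= 1.
  move: pp; rewrite lecE => /andP[_]; apply: le_trans; rewrite Re_cdot_self.
  apply: le_trans (ler_sum_term i _) => [|i']; last by rewrite addr_ge0 ?sqr_ge0.
  by case: b; rewrite /= ?lerDr ?lerDl sqr_ge0.
rewrite mxE => sq_le1; rewrite ler_norml; apply/andP; split; nra.
Qed.

Lemma herm_sphere_norm_le1 z : herm_sphere z -> `|z| <= 1.
Proof. by move=> Kz; apply: norm_le_coord => // k; apply: herm_sphere_coord_le1. Qed.

Lemma herm_sphere_Hz_neq0 z : herm_sphere z -> Hz z != 0.
Proof.
case=> hX l1X _; apply: contra_neq (@oner_neq0 R) => Hz0.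
rewrite -l1X; move: Hz0; rewrite /Hz; rewrite hermitianE in hX; rewrite hX.
by rewrite -mulr2n -scaler_nat => /eqP; rewrite scaler_eq0 pnatr_eq0 /= => /eqP ->; rewrite l1_0.
Qed.

Lemma compact_herm_sphere : compact herm_sphere.
Proof.
apply: bounded_closed_compact.
  by exists 1; split => // M M_gt1 z /herm_sphere_norm_le1 /le_trans; apply; apply: ltW.
have -> : herm_sphere = [set z | hermitian (Xz z)] `&` ([set z | l1 (Xz z) = 1] `&`
                          [set z | cdot (Pz z) (Pz z) <= 1]).
  by apply/seteqP; split => z /= => [[]|[? []]].
apply: closedI; first exact: closed_mxeq (mxcont_adjm mxcont_Xz) mxcont_Xz.
apply: closedI.
  by apply: closed_eqR; [exact: continuous_l1 mxcont_Xz | exact: cst_continuous].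
apply: closed_cle; last exact: ccont_cst.
exact: mxcontM (mxcont_adjm mxcont_Pz) mxcont_Pz 0 0.
Qed.

Lemma compact_deviation_sphere : compact deviation_sphere.
Proof.
apply: (subclosed_compact _ compact_herm_sphere); last by move=> z [].
have mxcont_Hz : mxcont Hz := mxcontD mxcont_Xz (mxcont_adjm mxcont_Xz).
have -> : deviation_sphere = herm_sphere `&` ([set z | cdot (Pz z) (Pz z) = 1] `&`
    ([set z | \tr (Hz z) = 0] `&`
     \bigcap_(u in [set: 'cV[C]_d]) [set z | 0 <= qf (Hz z) (orth_proj (Pz z) u)])).
  apply/seteqP; split => z /= => [[? ? ? psd]|[? [? [? psd]]]]; do !split => //.
    by move=> u _; apply: psd.
  by move=> u; apply: psd.
apply: closedI; first exact: compact_closed compact_herm_sphere.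
apply: closedI.
  apply: closed_ceq; last exact: ccont_cst.
  exact: mxcontM (mxcont_adjm mxcont_Pz) mxcont_Pz 0 0.
apply: closedI.
  by apply: closed_ceq; [apply: ccont_sum => i; apply: mxcont_Hz | exact: ccont_cst].
apply: closed_bigI => u _; apply: closed_cle; first exact: ccont_cst.
have mxcont_proj : mxcont (fun z => orth_proj (Pz z) u).
  rewrite /orth_proj; apply: mxcontD; first exact: mxcont_cst.
  apply/mxcontN/mxcontM; first exact: mxcont_Pz.
  by apply: mxcontM; [exact: mxcont_adjm mxcont_Pz | exact: mxcont_cst].
exact: mxcontM (mxcontM (mxcont_adjm mxcont_proj) mxcont_Hz) mxcont_proj 0 0.
Qed.

Lemma hermitian_on_herm_sphere (Y : 'M[C]_d) p :
    hermitian Y -> Y != 0 -> cdot p p <= 1 ->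
  exists z t, [/\ herm_sphere z, 0 < t, Pz z = p & Y = (t%:C)%C *: Hz z].
Proof.
move=> hY Y_neq0 p_le1; set s := l1 Y; have s_gt0 : 0 < s by apply: l1_gt0.
set W := ((s^-1)%:C)%C *: Y; have hW : hermitian W by apply: hermitianZ.
exists (coords W p), (s / 2); rewrite Pz_coords /Hz Xz_coords.
split => //; first split => //.
- by rewrite Xz_coords.
- by rewrite Xz_coords l1Z ?invr_ge0 ?ltW // mulVf ?gt_eqF.
- by rewrite Pz_coords.
- by rewrite divr_gt0.
rewrite hermitianE in hW; rewrite hW /W -scalerDl scalerA -!rmorphD -rmorphM.
have -> : s / 2 * (s^-1 + s^-1) = 1 by field; rewrite gt_eqF.
by rewrite rmorph1 scale1r.
Qed.

Lemma deviation_sphere_pure_deviation z :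
  deviation_sphere z -> pure_deviation (Pz z) (Hz z).
Proof.
case=> _ p1 trH H_ge0; apply/pure_deviation_orth_proj => //.
by split => //; apply: hermitian_Hz.
Qed.

Lemma pure_deviation_on_deviation_sphere psi X :
    cdot psi psi = 1 -> pure_deviation psi X -> X != 0 ->
  exists z t, [/\ deviation_sphere z, 0 < t & X = (t%:C)%C *: Hz z].
Proof.
move=> psi1 devX X_neq0; have [hX trX X_ge0] := devX.
have psi_le1 : cdot psi psi <= 1 by rewrite psi1.
have [z [t [Kz t_gt0 Pzpsi XE]]] := hermitian_on_herm_sphere hX X_neq0 psi_le1.
have HE : Hz z = ((t^-1)%:C)%C *: X.
  by rewrite XE scalerA -rmorphM mulVf ?gt_eqF ?scale1r.
exists z, t; split => //; split; rewrite ?Pzpsi //.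
  by rewrite HE mxtraceZ trX mulr0.
move=> u; rewrite HE qfZ mulr_ge0 //; first by rewrite ler0c invr_ge0 ltW.
by have [_ _] := (pure_deviation_orth_proj X psi1).1 devX; apply.
Qed.

End Coordinates.

Section NormBounds.
Variables (R : realType) (d l m : nat).
Variables (NH : 'M[R[i]]_d -> R) (NM : 'M[R]_(l, m) -> R).
Hypotheses (hNH : is_norm_H NH) (hNM : is_norm_M NM).
Variable L : 'M[R[i]]_d -> 'M[R]_(l, m).
Hypothesis L_lin : real_linear L.
Local Notation C := R[i].
Local Notation V := 'rV[R]_#|{: coord_index d}|.

Let NH_ge0 X : hermitian X -> 0 <= NH X := hNH.1 X.
Let NH_eq0 X : hermitian X -> NH X = 0 -> X = 0 := hNH.2.1 X.

Let NH0 : NH 0 = 0.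
Proof. by have := hNH.2.2.1 0 0 (@hermitian0 R d); rewrite scaler0 normr0 mul0r. Qed.

Let NM0 : NM 0 = 0.
Proof. by have := hNM.2.2.1 0 0; rewrite scaler0 normr0 mul0r. Qed.

Let NH_scale (t : R) X : 0 <= t -> hermitian X -> NH ((t%:C)%C *: X) = t * NH X.
Proof. by move=> t_ge0 hX; rewrite hNH.2.2.1 // ger0_norm. Qed.

Let NML_scale (t : R) X : 0 <= t -> NM (L ((t%:C)%C *: X)) = t * NM (L X).
Proof. by move=> t_ge0; rewrite real_linearZ // hNM.2.2.1 ger0_norm. Qed.

Let NH_Hz_seminormD (z w : V) : NH (Hz (z + w)) <= NH (Hz z) + NH (Hz w).
Proof. by rewrite HzD; apply: hNH.2.2.2; apply: hermitian_Hz. Qed.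

Let NH_Hz_seminormZ r (z : V) : NH (Hz (r *: z)) = `|r| * NH (Hz z).
Proof. by rewrite HzZ (hNH.2.2.1 _ _ (hermitian_Hz z)). Qed.

Let NML_Hz_seminormD (z w : V) : NM (L (Hz (z + w))) <= NM (L (Hz z)) + NM (L (Hz w)).
Proof. by rewrite HzD real_linearD //; apply: hNM.2.2.2. Qed.

Let NML_Hz_seminormZ r (z : V) : NM (L (Hz (r *: z))) = `|r| * NM (L (Hz z)).
Proof. by rewrite HzZ real_linearZ // hNM.2.2.1. Qed.

Lemma NH_Hz_lb : exists2 c, 0 < c & forall z : V, herm_sphere z -> c <= NH (Hz z).
Proof.
have cont := seminorm_continuous NH_Hz_seminormD NH_Hz_seminormZ.
apply: (compact_lb_gt0 (@compact_herm_sphere R d) cont).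
move=> z /herm_sphere_Hz_neq0 Hz_neq0; rewrite lt_def (NH_ge0 (hermitian_Hz z)) andbT.
exact: contra_neq (NH_eq0 (hermitian_Hz z)) Hz_neq0.
Qed.

Lemma real_linear_norm_bound :
  exists2 C, 0 <= C & forall X, hermitian X -> NM (L X) <= C * NH X.
Proof.
have [c c_gt0 c_le] := NH_Hz_lb.
set CL := \sum_k NM (L (Hz (delta_mx 0 k : V))).
have CL_ge0 : 0 <= CL by apply: sumr_ge0 => k _; apply: hNM.1.
exists (CL / c) => [|X hX]; first by rewrite divr_ge0 // ltW.
have [-> | X_neq0] := eqVneq X 0.
  rewrite real_linear0 // NM0; apply: mulr_ge0; first by rewrite divr_ge0 // ltW.
  exact: NH_ge0 (@hermitian0 R d).
have p_le1 : cdot (0 : 'cV[C]_d) 0 <= 1 by rewrite /cdot mulmx0 mxE ler01.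
have [z [t [Sz t_gt0 _ ->]]] := hermitian_on_herm_sphere hX X_neq0 p_le1.
have t_ge0 := ltW t_gt0; have hHz := hermitian_Hz z.
rewrite NML_scale // NH_scale // mulrCA ler_pM2l //.
have NML_le := seminorm_norm_le1 NML_Hz_seminormD NML_Hz_seminormZ (herm_sphere_norm_le1 Sz).
apply: le_trans NML_le _; rewrite mulrAC ler_pdivlMr //.
by apply: ler_wpM2l => //; apply: c_le.
Qed.

Lemma pure_deviation_lb : (forall psi X, pure_deviation psi X -> L X = 0 -> X = 0) ->
  exists2 k, 0 < k & forall psi X,
    cdot psi psi = 1 -> pure_deviation psi X -> k * NH X <= NM (L X).
Proof.
move=> L_dev; have cont := seminorm_continuous NML_Hz_seminormD NML_Hz_seminormZ.
have [c c_gt0 c_le] : exists2 c, 0 < c & forall z : V, deviation_sphere z -> c <= NM (L (Hz z)).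
  apply: (compact_lb_gt0 (@compact_deviation_sphere R d) cont) => z Dz; have [Sz _ _ _] := Dz.
  rewrite lt_def hNM.1 andbT; apply: contra_neq _ (herm_sphere_Hz_neq0 Sz) => /hNM.2.1.
  exact: L_dev (deviation_sphere_pure_deviation Dz).
set CH := \sum_k NH (Hz (delta_mx 0 k : V)).
have CH_ge0 : 0 <= CH by apply: sumr_ge0 => k _; apply/NH_ge0/hermitian_Hz.
exists (c / (CH + 1)) => [|psi X psi1 devX]; first by rewrite divr_gt0 // ltr_wpDl.
have [-> | X_neq0] := eqVneq X 0; first by rewrite NH0 mulr0 hNM.1.
have [z [t [Dz t_gt0 ->]]] := pure_deviation_on_deviation_sphere psi1 devX X_neq0.
have [Sz _ _ _] := Dz; have t_ge0 := ltW t_gt0; have hHz := hermitian_Hz z.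
rewrite NML_scale // NH_scale // mulrCA ler_pM2l //.
apply: le_trans (c_le z Dz); rewrite mulrAC ler_pdivrMr ?ltr_wpDl //.
apply: ler_wpM2l; first exact: ltW.
have NH_le := seminorm_norm_le1 NH_Hz_seminormD NH_Hz_seminormZ (herm_sphere_norm_le1 Sz).
by apply: le_trans NH_le _; rewrite lerDl.
Qed.

Lemma opnorm_ub X : hermitian X -> NH X <= 1 -> NM (L X) <= opnorm NH NM L.
Proof.
move=> hX NX_le1; apply: sup_upper_bound; last by exists X.
split; first by exists (NM (L 0)), 0 => //; split; [exact: hermitian0 | rewrite NH0 ler01].
have [C C_ge0 LC] := real_linear_norm_bound.
by exists C => _ [Y [hY NY_le1] <-]; apply: le_trans (LC Y hY) _; rewrite ler_piMr.
Qed.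

Lemma opnorm_le X : hermitian X -> NM (L X) <= opnorm NH NM L * NH X.
Proof.
move=> hX; have [NX0 | NX_neq0] := eqVneq (NH X) 0.
  by rewrite (NH_eq0 hX NX0) NH0 mulr0 real_linear0 // NM0.
have NX_gt0 : 0 < NH X by rewrite lt_def NX_neq0 NH_ge0.
have NX_inv_ge0 : 0 <= (NH X)^-1 by rewrite invr_ge0 ltW.
have := opnorm_ub (hermitianZ (NH X)^-1 hX).
rewrite (NH_scale NX_inv_ge0 hX) NML_scale // mulVf // lexx => /(_ isT).
by rewrite mulrC ler_pdivrMr.
Qed.

End NormBounds.

Theorem theorem2 (R : realType) (d l m : nat)
  (NH : 'M[R[i]]_d -> R) (NM : 'M[R]_(l, m) -> R)
  (Q : 'I_l -> 'I_m -> 'M[R[i]]_d) :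
  (0 < d)%N -> (0 < l)%N -> (0 < m)%N ->
  is_norm_H NH -> is_norm_M NM ->
  is_scheme Q -> determines_pure Q ->
  exists eps : R, 0 < eps /\
    forall Q' : 'I_l -> 'I_m -> 'M[R[i]]_d,
      is_scheme Q' -> eps_close NH NM eps Q Q' -> determines_pure Q'.
Proof.
move=> _ _ _ hNH hNM _ dQ.
have [k k_gt0 k_le] := pure_deviation_lb hNH hNM (MQ_real_linear Q)
  (fun psi X => determines_pure_deviation dQ).
exists k; split => // Q' _ close _ rho [psi [psi1 ->]] rho_state MQ'_eq.
set L := fun X => MQ Q X - MQ Q' X.
have L_lin : real_linear L := real_linear_sub (MQ_real_linear Q) (MQ_real_linear Q').
have devY := pure_deviation_sub psi1 rho_state; have [hY _ _] := devY.
set Y := rho - _ in devY hY.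
have LY : L Y = MQ Q Y.
  by rewrite /L [MQ Q' Y]real_linearB ?MQ'_eq ?subrr ?subr0 //; exact: MQ_real_linear.
have := opnorm_le hNH hNM L_lin hY; rewrite LY => op_le.
have NHY0 : NH Y = 0.
  have := le_trans (k_le psi Y psi1 devY) op_le; have := hNH.1 Y hY.
  move: close; rewrite /eps_close -/L; nra.
by apply/eqP; rewrite -subr_eq0; apply/eqP; exact: hNH.2.1 Y hY NHY0.
Qed.
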